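(* Let $m\geq 2$ be an integer and let $H$ be $\mathrm{Sym}(m)$ or $\mathrm{Alt}(m)$ acting on the set of $2$-element subsets of $\{1,\ldots,m\}$. If $H$ contains a permutation $g$ having at most four cycles in this action, then $m\leq 9$.
   Context: The number of cycles of a permutation is the number of orbits of the cyclic group it generates, fixed points included. *)

From mathcomp Require Import all_boot all_fingroup all_solvable alt.
Set Implicit Arguments. Unset Strict Implicit. Unset Printing Implicit Defensive.

Definition two_subsets (m : nat) : {set {set 'I_m}} :=
  [set A : {set 'I_m} | #|A| == 2].

(* Number of cycles of g acting on 2-subsets (A |-> g @: A): the number of
   orbits of the cyclic group <[g]> on the 2-subsets, fixed points included. *)
Definition pair_cycles (m : nat) (g : {perm 'I_m}) : nat :=
  #|[set orbit ('P^*)%act <[g]> A | A in two_subsets m]|.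

From mathcomp Require Import all_boot all_fingroup all_solvable alt.
From mathcomp Require Import zify.

Set Implicit Arguments. Unset Strict Implicit. Unset Printing Implicit Defensive.
Import GroupScope.

(** Fix a representative [r_c] in each cycle [c] of [s] (on points), and let
    [k] be the number of cycles. The pair orbits of [{r_c, z}] with [z] in [c]
    and [z != r_c] number at least [(#|T| - k) / 2], because such an orbit
    meets at most two of these pairs; the pairs [{r_c, r_d}] of distinct
    representatives lie in [k(k-1)/2] distinct orbits, none of the first kind.
    Hence [2 N >= #|T| - k + k(k-1)] for the number [N] of pair orbits, and
    [N <= 4] forces [#|T| <= 8 + 2k - k^2 <= 9]. *)

Section PairOrbits.
Variables (T : finType) (s : {perm T}).

Definition pair_orbit (A : {set T}) : {set {set T}} := orbit ('P^*)%act <[s]> A.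

Definition pair_orbits : {set {set {set T}}} :=
  [set pair_orbit A | A in [set A : {set T} | #|A| == 2]].

Definition cycle_rep (z : T) : T := odflt z [pick y in porbit s z].

Definition cycle_reps : {set T} := [set z | cycle_rep z == z].

Lemma mem_cycle_rep z : cycle_rep z \in porbit s z.
Proof. by rewrite /cycle_rep; case: pickP => [y|_] //=; apply: porbit_id. Qed.

Lemma eq_cycle_rep z y : y \in porbit s z -> cycle_rep y = cycle_rep z.
Proof.
move=> yz; have Ezy : porbit s y = porbit s z by apply/eqP; rewrite eq_porbit_mem.
rewrite /cycle_rep Ezy; case: pickP => [//|none] /=.
by have := none z; rewrite porbit_id.
Qed.

Lemma cycle_rep_idem z : cycle_rep (cycle_rep z) = cycle_rep z.
Proof. exact/eq_cycle_rep/mem_cycle_rep. Qed.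

Lemma card_cycle_reps : #|cycle_reps| = #|porbits s|.
Proof.
rewrite -(@card_in_imset _ _ (porbit s)).
  apply: eq_card => o; apply/imsetP/imsetP => -[z _ ->].
    by exists z.
  exists (cycle_rep z); first by rewrite inE cycle_rep_idem.
  by apply/esym/eqP; rewrite eq_porbit_mem mem_cycle_rep.
move=> x y; rewrite !inE => /eqP rx /eqP ry Exy.
by rewrite -rx -ry; apply: eq_cycle_rep; rewrite -Exy porbit_id.
Qed.

Lemma cycle_act_porbit a x : a \in <[s]> -> a x \in porbit s x.
Proof. by case/cycleP=> j ->; apply: mem_porbit. Qed.

Lemma cycle_actC a i x : a \in <[s]> -> a ((s ^+ i) x) = (s ^+ i) (a x).
Proof. by case/cycleP=> j ->; rewrite -!permM -!expgD addnC. Qed.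

Lemma eq_pair_orbitP (A B : {set T}) :
  pair_orbit A = pair_orbit B -> exists2 a, a \in <[s]> & a @: B = A.
Proof.
move=> E; have : A \in pair_orbit B by rewrite -E orbit_refl.
by case/orbitP=> a Ha <-; exists a; rewrite //= setactE.
Qed.

Lemma cycle_rep_act a x : a \in <[s]> -> cycle_rep (a x) = cycle_rep x.
Proof. by move=> Ha; apply/eq_cycle_rep/cycle_act_porbit. Qed.

Let rep_orbit z := pair_orbit [set cycle_rep z; z].
Let non_reps := ~: cycle_reps.
Let rep_pairs := [set B : {set T} | B \subset cycle_reps & #|B| == 2].

Lemma card_non_reps_le : #|non_reps| <= 2 * #|rep_orbit @: non_reps|.
Proof.
rewrite mulnC -sum1_card (partition_big_imset rep_orbit) /= -sum_nat_const.
apply: leq_sum => o /imsetP[z0 _ ->]; rewrite sum1dep_card.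
have := mem_cycle_rep z0; rewrite porbit_sym => /porbitP[i r_def].
set r := cycle_rep z0 in r_def.
(* The only other candidate in the fibre of [z0] is the mirror [s^-i r] of [z0]. *)
apply: (@leq_trans #|[set z0; (s ^+ i)^-1 r]|); last by rewrite cards2; case: eqP.
apply/subset_leq_card/subsetP => z; rewrite !inE => /andP[z_nonrep /eqP Ez].
have [a Ha] := eq_pair_orbitP Ez; rewrite imsetU !imset_set1 => Eset.
have z_in : z \in [set a r; a z0] by rewrite Eset !inE eqxx orbT.
have rz_in : cycle_rep z \in [set a r; a z0] by rewrite Eset !inE eqxx.
have rz : cycle_rep z = r.
  by move: z_in; rewrite !inE => /orP[] /eqP ->; rewrite cycle_rep_act ?cycle_rep_idem.
rewrite rz in rz_in z_nonrep.
move: rz_in z_in; rewrite !inE => /orP[] /eqP Hr /orP[] /eqP Hz.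
- by rewrite Hz -Hr eqxx in z_nonrep.
- by rewrite Hz r_def cycle_actC // -Hr eqxx.
- by rewrite Hr r_def cycle_actC // -Hz permK eqxx orbT.
- by rewrite Hz -Hr eqxx in z_nonrep.
Qed.

Lemma card_rep_pairs_orbits : #|pair_orbit @: rep_pairs| = 'C(#|cycle_reps|, 2).
Proof.
rewrite card_in_imset ?cards_draws // => B B'.
rewrite !inE => /andP[BR /eqP cB] /andP[B'R /eqP cB'] /eq_pair_orbitP[a Ha EB].
apply/eqP; rewrite eqEcard cB cB' leqnn andbT -EB.
apply/subsetP => _ /imsetP[x xB' ->].
have := subsetP B'R x xB'.
have : a x \in cycle_reps by apply: (subsetP BR); rewrite -EB imset_f.
by rewrite !inE cycle_rep_act // => /eqP <- /eqP ->.
Qed.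

Lemma rep_orbits_disjoint : [disjoint rep_orbit @: non_reps & pair_orbit @: rep_pairs].
Proof.
apply/pred0P => o; apply/negbTE/negP => /andP[/imsetP[z z_nonrep ->]] /imsetP[B].
rewrite inE => /andP[BR _] /esym/eq_pair_orbitP[a Ha].
rewrite imsetU !imset_set1 => EB.
have : a (cycle_rep z) \in cycle_reps by apply: (subsetP BR); rewrite -EB !inE eqxx.
have : a z \in cycle_reps by apply: (subsetP BR); rewrite -EB !inE eqxx orbT.
rewrite !inE !cycle_rep_act // cycle_rep_idem => /eqP az /eqP arz.
by move: z_nonrep; rewrite !inE (perm_inj (etrans (esym arz) az)) eqxx.
Qed.

Lemma card_pair_orbits_ge :
  #|T| + #|porbits s| * (#|porbits s|).-1 <= 2 * #|pair_orbits| + #|porbits s|.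
Proof.
set O1 := rep_orbit @: non_reps.
set O2 := pair_orbit @: rep_pairs.
have sub : O1 :|: O2 \subset pair_orbits.
  apply/subsetP => o; rewrite inE => /orP[] /imsetP[x Hx ->]; apply: imset_f.
    by rewrite inE cards2; move: Hx; rewrite !inE eq_sym => ->.
  by move: Hx; rewrite !inE => /andP[].
have card_union : #|O1 :|: O2| = #|O1| + #|O2|.
  by apply/eqP; rewrite (leq_card_setU _ _).2 rep_orbits_disjoint.
have := subset_leq_card sub; rewrite card_union card_rep_pairs_orbits -card_cycle_reps.
have := card_non_reps_le; rewrite -/O1 => non_reps_le.
have := bin_ffact #|cycle_reps| 2; rewrite ffactnS ffactn1; change 2`! with 2 => <-.
rewrite -(cardsC cycle_reps) -/non_reps.
move: #|non_reps| #|O1| #|pair_orbits| 'C(_, 2) non_reps_le => d o p c; lia.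
Qed.

End PairOrbits.

Theorem lemma3p3 (m : nat) (H : {set {perm 'I_m}}) (g : {perm 'I_m}) :
  2 <= m ->
  (H = Sym 'I_m \/ H = Alt 'I_m) ->
  g \in H ->
  pair_cycles g <= 4 ->
  m <= 9.
Proof.
move=> _ _ _ few_cycles.
have := card_pair_orbits_ge g; rewrite card_ord.
change #|pair_orbits g| with (pair_cycles g).
case: #|porbits g| => [|k] /=; nia.
Qed.
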